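(* Let $V$ be a finite set, $A\subseteq V$, $i\in V$, and $t_i,\lambda\in\mathbb{C}$. Then (a) $\int d\psi_i\,d\bar\psi_i\,e^{t_i\bar\psi_i\psi_i}\,\tau_A=\tau_{A\setminus\{i\}}$ if $i\in A$, and $=t_i\tau_A$ if $i\notin A$; (b) $\int d\psi_i\,d\bar\psi_i\,e^{t_i\bar\psi_i\psi_i}\,f_A^{(\lambda)}=f_{A\setminus\{i\}}^{(\lambda)}+(t_i-\lambda)\tau_{A\setminus\{i\}}$ if $i\in A$, and $=t_if_A^{(\lambda)}$ if $i\notin A$.
   Context: For each $i\in V$ let $\psi_i,\bar\psi_i$ be anticommuting generators of a Grassmann algebra over $\mathbb{C}$; $\tau_A=\prod_{j\in A}\bar\psi_j\psi_j$ ($\tau_\emptyset=1$); $f_A^{(\lambda)}=\lambda(1-|A|)\tau_A+\sum_{j\in A}\tau_{A\setminus\{j\}}-\sum_{j,k\in A,\ j\neq k}\bar\psi_j\psi_k\,\tau_{A\setminus\{j,k\}}$ (with $f_\emptyset^{(\lambda)}=\lambda$). Berezin integration over the pair at $i$: $\int d\psi_i\,d\bar\psi_i$ is linear over the subalgebra generated by the other variables, with $\int d\psi_i\,d\bar\psi_i\,\bar\psi_i\psi_i=1$ and $\int d\psi_i\,d\bar\psi_i$ of $1,\psi_i,\bar\psi_i$ equal to $0$. *)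

From Stdlib Require Import Reals.
From HB Require Import structures.
From mathcomp Require Import all_boot all_order all_algebra.
From mathcomp Require Import complex Rstruct.

Set Implicit Arguments.
Unset Strict Implicit.
Unset Printing Implicit Defensive.

Import Order.TTheory GRing.Theory Num.Theory.
Local Open Scope ring_scope.

Definition Cplx : fieldType := complex R.

Section Grassmann.
Variables (V : finType) (K : fieldType).

(* Generators: (i, true) stands for psibar_i, (i, false) for psi_i. *)
Definition gen := (V * bool)%type.

(* A fixed total order on generators: psibar_i immediately precedes psi_i. *)
Definition gkey (x : gen) : nat := ((enum_rank x.1 : nat).*2 + ~~ x.2)%N.

(* Grassmann algebra: coefficients in the monomial basis e_S, where e_S is the
   product of the generators of S written in increasing gkey order. *)
Local Notation grass := {ffun {set gen} -> K^o}.

(* e_S * e_T = msign S T * e_(S :|: T) *)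
Definition msign (S T : {set gen}) : K :=
  if [disjoint S & T] then
    (-1) ^+ #|[set p : gen * gen | [&& p.1 \in S, p.2 \in T & (gkey p.2 < gkey p.1)%N]]|
  else 0.

Definition gmul (x y : grass) : grass :=
  [ffun U => \sum_(S : {set gen}) \sum_(T : {set gen} | S :|: T == U)
                msign S T * x S * y T].

Definition gone : grass := [ffun S => (S == set0)%:R].

Definition gvar (x : gen) : grass := [ffun S => (S == [set x])%:R].

Definition psi (i : V) : grass := gvar (i, false).
Definition psibar (i : V) : grass := gvar (i, true).

Definition gpow (x : grass) (n : nat) : grass := iter n (gmul x) gone.

(* Exponential; the series is finite since every element without constant
   term is nilpotent of order at most #|gen| + 1. *)
Definition gexp (x : grass) : grass :=
  \sum_(k < (#|{: gen}|).+2) (k`!%:R)^-1 *: gpow x k.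

Definition tau (A : {set V}) : grass :=
  \big[gmul/gone]_(j in A) gmul (psibar j) (psi j).

Definition fA (lam : K) (A : {set V}) : grass :=
  (lam * (1 - #|A|%:R)) *: tau A
  + \sum_(j in A) tau (A :\ j)
  - \sum_(j in A) \sum_(k in A | k != j)
        gmul (gmul (psibar j) (psi k)) (tau (A :\ j :\ k)).

(* Berezin integration  int dpsi_i dpsibar_i : linear over the subalgebra
   generated by the other variables (coefficients on the left), with
   int psibar_i psi_i = 1 and int of 1, psi_i, psibar_i = 0.  In the monomial
   basis (psibar_i psi_i adjacent and even): e_S |-> e_(S \ {psibar_i, psi_i})
   if S contains both, 0 otherwise. *)
Definition berezin (i : V) (x : grass) : grass :=
  [ffun U : {set gen} => if ((i, true) \in U) || ((i, false) \in U) then 0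
             else x (U :|: [set (i, true); (i, false)])].

End Grassmann.

Arguments msign {V K}.
Arguments gmul {V K}.
Arguments gone {V K}.
Arguments gvar {V K}.
Arguments psi {V K}.
Arguments psibar {V K}.
Arguments gpow {V K}.
Arguments gexp {V K}.
Arguments tau {V K}.
Arguments fA {V K}.
Arguments berezin {V K}.

From Stdlib Require Import Reals.
From HB Require Import structures.
From mathcomp Require Import all_boot all_order all_algebra.
From mathcomp Require Import complex Rstruct.
From mathcomp Require Import zify ring.
Import GRing.Theory.
Local Open Scope ring_scope.

Set Implicit Arguments.
Unset Strict Implicit.

(* Since (psibar_i psi_i)^2 = 0, the exponential
   is 1 + t psibar_i psi_i, and integrating psibar_i psi_i Y over the pair at i
   returns the part of Y free of psi_i and psibar_i, i.e. Y at
   psi_i = psibar_i = 0 ([subst0]).  Hence the integral of e^(t psibar_i psi_i) Y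
   is  int Y + t Y|_(psi_i = psibar_i = 0).  Both tau_A and every summand of f_A
   are signed monomials; the pairs psibar_j psi_j are even, so integrating out
   the pair at i only deletes it, without changing signs, and the formulas
   follow by evaluating the two pieces term by term. *)

Section Grassmann.
Variables (V : finType) (K : fieldType).
Local Notation gen := (gen V).
Local Notation grass := {ffun {set gen} -> K^o}.

Definition mono (S : {set gen}) : grass := [ffun U => (U == S)%:R].

Lemma gmul_mono S T : gmul (mono S) (mono T) = msign S T *: mono (S :|: T).
Proof.
apply/ffunP => U; rewrite !ffunE (bigD1 S) //= [X in _ + X]big1 ?addr0; last first.
  by move=> S' /negPf nS; apply: big1 => T' _; rewrite ffunE nS mulr0 mul0r.
rewrite big_mkcond (bigD1 T) //= [X in _ + X]big1 ?addr0; last first.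
  by move=> T' /negPf nT; rewrite !ffunE nT; case: ifP => _; rewrite ?mulr0.
rewrite !ffunE !eqxx mulr1 [U == _]eq_sym.
by case: ifP => _ /=; rewrite ?scaler0.
Qed.

Lemma gmulZl a (x y : grass) : gmul (a *: x) y = a *: gmul x y.
Proof.
apply/ffunP => U; rewrite !ffunE scaler_sumr; apply: eq_bigr => S _.
by rewrite scaler_sumr; apply: eq_bigr => T _; rewrite !ffunE /GRing.scale /=; ring.
Qed.

Lemma gmulZr a (x y : grass) : gmul x (a *: y) = a *: gmul x y.
Proof.
apply/ffunP => U; rewrite !ffunE scaler_sumr; apply: eq_bigr => S _.
by rewrite scaler_sumr; apply: eq_bigr => T _; rewrite !ffunE /GRing.scale /=; ring.
Qed.

Lemma gmulDl (x y z : grass) : gmul (x + y) z = gmul x z + gmul y z.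
Proof.
apply/ffunP => U; rewrite !ffunE -big_split; apply: eq_bigr => S _.
by rewrite -big_split; apply: eq_bigr => T _; rewrite !ffunE /= mulrDr mulrDl.
Qed.

Lemma gmulr0 (x : grass) : gmul x 0 = 0.
Proof.
apply/ffunP => U; rewrite !ffunE big1 // => S _; apply: big1 => T _.
by rewrite ffunE mulr0.
Qed.

Definition inversions (S T : {set gen}) : nat :=
  #|[set p : gen * gen | [&& p.1 \in S, p.2 \in T & (gkey p.2 < gkey p.1)%N]]|.

Lemma msignE S T :
  msign S T = if [disjoint S & T] then (-1) ^+ inversions S T else 0 :> K.
Proof. by []. Qed.

Lemma msign0l (T : {set gen}) : msign set0 T = 1 :> K.
Proof.
rewrite msignE -setI_eq0 set0I eqxx /inversions (_ : [set p | _] = set0) ?cards0 //.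
by apply/setP => p; rewrite !inE.
Qed.

Lemma msign0r (S : {set gen}) : msign S set0 = 1 :> K.
Proof.
rewrite msignE -setI_eq0 setI0 eqxx /inversions (_ : [set p | _] = set0) ?cards0 //.
by apply/setP => p; rewrite !inE andbF.
Qed.

Lemma gmul1l (y : grass) : gmul gone y = y.
Proof.
apply/ffunP => U; rewrite ffunE (bigD1 set0) //= [X in _ + X]big1 ?addr0; last first.
  by move=> S' /negPf nS; apply: big1 => T' _; rewrite ffunE nS mulr0 mul0r.
rewrite (bigD1 U) ?set0U //= [X in _ + X]big1 ?addr0; last first.
  by move=> T'; rewrite set0U => /andP[/eqP -> /negPf]; rewrite eqxx.
by rewrite msign0l ffunE eqxx !mul1r.
Qed.

Lemma gmul1r (y : grass) : gmul y gone = y.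
Proof.
apply/ffunP => U; rewrite ffunE (bigD1 U) //= [X in _ + X]big1 ?addr0; last first.
  move=> S' nS; rewrite big_mkcond; apply: big1 => T' _.
  case: eqP => // eU; rewrite ffunE; case: eqP => [T0|]; last by rewrite mulr0.
  by rewrite T0 setU0 in eU; rewrite eU eqxx in nS.
rewrite big_mkcond (bigD1 set0) //= setU0 eqxx [X in _ + X]big1 ?addr0; last first.
  by move=> T' /negPf nT; rewrite ffunE nT mulr0; case: ifP.
by rewrite msign0r ffunE eqxx mul1r mulr1.
Qed.

Definition pairs (C : {set V}) : {set gen} := [set x | x.1 \in C].

Lemma inversions_sum (S T : {set gen}) : inversions S T =
  (\sum_(x : gen) \sum_(y : gen) [&& x \in S, y \in T & gkey y < gkey x])%N.
Proof.
rewrite /inversions -sum1_card pair_big /= big_mkcond /=; apply: eq_bigr => -[x y] _.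
by rewrite !inE /=; case: (_ && _).
Qed.

Lemma inversionsUr (S T1 T2 : {set gen}) : [disjoint T1 & T2] ->
  inversions S (T1 :|: T2) = (inversions S T1 + inversions S T2)%N.
Proof.
rewrite -setI_eq0 => /eqP T12; rewrite !inversions_sum -big_split.
apply: eq_bigr => x _; rewrite -big_split; apply: eq_bigr => y _ /=.
rewrite inE; case: (x \in S) => //=.
case y1: (y \in T1); case y2: (y \in T2) => //=; last by rewrite addn0.
by have := congr1 (fun B : {set gen} => y \in B) T12; rewrite /= inE y1 y2 inE.
Qed.

Lemma even_sum_gen (F : gen -> nat) :
  (forall v, F (v, true) = F (v, false)) -> ~~ odd (\sum_(x : gen) F x).
Proof.
move=> Fpair; rewrite (_ : \sum_x F x = \sum_v \sum_b F (v, b))%N; last first.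
  by rewrite pair_big; apply: eq_bigr => -[].
apply: (big_ind (fun n => ~~ odd n)) => [//|a b /negPf ea /negPf eb|v _].
  by rewrite oddD ea eb.
by rewrite big_bool /= Fpair addnn odd_double.
Qed.

(* Distinct vertices have gkeys at distance at least 2 apart, so psibar_v and
   psi_v compare alike with every generator at another vertex. *)
Lemma ltn_gkey_pair (v w : V) (b : bool) : v != w ->
  (gkey (w, b) < gkey (v, true))%N = (gkey (w, b) < gkey (v, false))%N /\
  (gkey (v, true) < gkey (w, b))%N = (gkey (v, false) < gkey (w, b))%N.
Proof.
move=> nvw; have : (enum_rank v : nat) != enum_rank w.
  by apply: contra nvw => /eqP /val_inj /enum_rank_inj ->.
by rewrite /gkey /= -!muln2; case: b; lia.
Qed.

Lemma even_inversions_pairsl (C : {set V}) (T : {set gen}) :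
  {in T, forall y, y.1 \notin C} -> ~~ odd (inversions (pairs C) T).
Proof.
move=> TC; rewrite inversions_sum; apply: even_sum_gen => v.
apply: eq_bigr => -[w b] _; rewrite !inE /=.
case vC: (v \in C) => //=; case wT: ((w, b) \in T) => //=.
have nvw : v != w by apply: contraTneq (TC _ wT) => <-; rewrite vC.
by case: (ltn_gkey_pair b nvw) => ->.
Qed.

Lemma even_inversions_pairsr (S : {set gen}) (C : {set V}) :
  {in S, forall x, x.1 \notin C} -> ~~ odd (inversions S (pairs C)).
Proof.
move=> SC; rewrite inversions_sum.
apply: (big_ind (fun n => ~~ odd n)) => [//|a b /negPf ea /negPf eb|[v b] _].
  by rewrite oddD ea eb.
apply: even_sum_gen => w; rewrite !inE /=.
case vS: ((v, b) \in S) => //=; case wC: (w \in C) => //=.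
have nwv : w != v by apply: contraTneq (SC _ vS) => <-; rewrite wC.
by case: (ltn_gkey_pair b nwv) => _ ->.
Qed.

Lemma msign_pairsl (C : {set V}) (T : {set gen}) :
  {in T, forall y, y.1 \notin C} -> msign (pairs C) T = 1 :> K.
Proof.
move=> TC; rewrite msignE -signr_odd (negPf (even_inversions_pairsl TC)).
have -> // : [disjoint pairs C & T].
by rewrite disjoint_sym disjoint_subset; apply/subsetP => y /TC; rewrite !inE.
Qed.

Lemma msign_pairs_setD1r (S : {set gen}) (B : {set V}) (v : V) :
  {in S, forall x, x.1 != v} -> msign S (pairs (B :\ v)) = msign S (pairs B) :> K.
Proof.
move=> Sv; have -> : pairs B = pairs (B :\ v) :|: pairs (B :&: [set v]).
  by apply/setP => x; rewrite !inE; case: (x.1 == v); rewrite ?andbT ?andbF ?orbF.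
rewrite !msignE inversionsUr; last first.
  by rewrite -setI_eq0; apply/eqP/setP => x; rewrite !inE; case: eqP; rewrite ?andbF.
rewrite exprD -[(-1) ^+ inversions S _ in X in _ * X]signr_odd.
rewrite (negPf (even_inversions_pairsr _)) ?mulr1; last first.
  by move=> x /Sv /negPf xv; rewrite !inE xv andbF.
rewrite -!setI_eq0 (_ : S :&: (_ :|: _) = S :&: pairs (B :\ v)) //.
apply/setP => x; rewrite !inE; have [xS|] := boolP (x \in S) => //.
by rewrite (negPf (Sv x xS)) andbF orbF.
Qed.

Lemma pair_mono (j : V) : gmul (psibar j) (psi j) = mono (pairs [set j]).
Proof.
rewrite gmul_mono msignE disjoints1 inE xpair_eqE andbF /=.
rewrite /inversions (_ : [set p | _] = set0) ?cards0 ?scale1r; last first.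
  apply/setP => -[x y]; rewrite !inE /=.
  by apply/negP => /and3P[/eqP -> /eqP ->]; rewrite /gkey /=; lia.
congr mono; apply/setP => -[v b]; rewrite !inE /= !xpair_eqE.
by case: b; rewrite ?andbT ?andbF ?orbF.
Qed.

Lemma prod_pairs_mono (s : seq V) : uniq s ->
  \big[gmul/gone]_(j <- s) gmul (psibar j) (psi j) = mono (pairs [set j in s]).
Proof.
elim: s => [_|j s IHs /= /andP[js us]].
  by rewrite big_nil; congr mono; apply/setP => x; rewrite !inE.
rewrite big_cons IHs // pair_mono gmul_mono msign_pairsl ?scale1r; last first.
  by move=> y; rewrite !inE; apply: contraTN => /eqP ->.
by congr mono; apply/setP => -[v b]; rewrite !inE.
Qed.

Lemma tau_mono (A : {set V}) : tau A = mono (pairs A).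
Proof.
rewrite /tau -big_filter prod_pairs_mono ?filter_uniq ?index_enum_uniq //.
by congr mono; apply/setP => x; rewrite !inE mem_filter mem_index_enum andbT.
Qed.

Definition cross_term (A : {set V}) (j k : V) : grass :=
  gmul (gmul (psibar j) (psi k)) (tau (A :\ j :\ k)).

Definition tau_sum (A : {set V}) : grass := \sum_(j in A) tau (A :\ j).

Definition cross_sum (A : {set V}) : grass :=
  \sum_(j in A) \sum_(k in A | k != j) cross_term A j k.

Lemma fAE (lam : K) (A : {set V}) :
  fA lam A = (lam * (1 - #|A|%:R)) *: tau A + tau_sum A - cross_sum A.
Proof. by []. Qed.

Lemma cross_term_mono (A : {set V}) (j k : V) : exists c,
  cross_term A j k = c *: mono ([set (j, true); (k, false)] :|: pairs (A :\ j :\ k)).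
Proof.
by rewrite /cross_term tau_mono gmul_mono gmulZl gmul_mono scalerA; eexists.
Qed.

Variable i : V.

Definition subst0 (x : grass) : grass :=
  [ffun U : {set gen} => if ((i, true) \in U) || ((i, false) \in U) then 0 else x U].

Lemma berezin_is_linear : linear (berezin i : grass -> grass).
Proof.
by move=> a x y; apply/ffunP => U; rewrite !ffunE; case: ifP => // _; rewrite scaler0 addr0.
Qed.
HB.instance Definition _ :=
  GRing.isLinear.Build K grass grass _ (berezin i) berezin_is_linear.

Lemma subst0_is_linear : linear subst0.
Proof.
by move=> a x y; apply/ffunP => U; rewrite !ffunE; case: ifP => // _; rewrite scaler0 addr0.
Qed.
HB.instance Definition _ := GRing.isLinear.Build K grass grass _ subst0 subst0_is_linear.

Lemma pairs1 : pairs [set i] = [set (i, true); (i, false)].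
Proof.
by apply/setP => -[v b]; rewrite !inE /= !xpair_eqE; case: b; rewrite ?andbT ?andbF ?orbF.
Qed.

Lemma berezin_mono (S : {set gen}) : berezin i (mono S) =
  if pairs [set i] \subset S then mono (S :\: pairs [set i]) else 0.
Proof.
rewrite pairs1; apply/ffunP => U.
have [iS | iS] := boolP ([set (i, true); (i, false)] \subset S); rewrite !ffunE; last first.
  by case: ifP => // _; case: (_ =P S) => // eU; case/negP: iS; rewrite -eU subsetUr.
case: ifP => [iU | /norP[iU1 iU2]].
  by case: (_ =P _) => // eU; move: iU; rewrite eU !inE !eqxx /= !orbT.
move: iS; rewrite subUset !sub1set => /andP[iS1 iS2].
suff -> : (U :|: [set (i, true); (i, false)] == S) = (U == S :\: [set (i, true); (i, false)]) by [].
apply/eqP/eqP => [<- | ->]; apply/setP => x; rewrite !inE.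
  by case: eqP => [->|]; [rewrite (negPf iU1) | case: eqP => [->|]; rewrite ?(negPf iU2) ?orbF].
by case: eqP => [->|]; [rewrite iS1 | case: eqP => [->|]; rewrite ?iS2 ?orbF ?orbT].
Qed.

Lemma subst0_mono (S : {set gen}) :
  subst0 (mono S) = if ((i, true) \in S) || ((i, false) \in S) then 0 else mono S.
Proof.
apply/ffunP => U; case: ifP => iS; rewrite !ffunE; case: ifP => iU //;
  by case: (U =P S) => // eU; move: iS iU; rewrite eU => ->.
Qed.

Lemma berezin_pairs_mul (y : grass) : berezin i (gmul (mono (pairs [set i])) y) = subst0 y.
Proof.
apply/ffunP => U; rewrite !ffunE; case: ifP => // iU.
have Ui : {in U, forall x, x.1 \notin [set i]}.
  by move=> [v []] xU; rewrite inE; apply: contraFN iU => /eqP /= vi; rewrite -vi xU ?orbT.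
have disjU : [disjoint pairs [set i] & U].
  by rewrite disjoint_sym disjoint_subset; apply/subsetP => x /Ui; rewrite !inE.
rewrite -pairs1 (bigD1 (pairs [set i])) //= [X in _ + X]big1 ?addr0; last first.
  by move=> S' /negPf nS; apply: big1 => T _; rewrite ffunE nS mulr0 mul0r.
rewrite (bigD1 U) //= ?[_ :|: U]setUC // [X in _ + X]big1 ?addr0; last first.
  move=> T /andP[/eqP PTU nTU]; rewrite msignE; case: ifP => [disjT|]; last by rewrite !mul0r.
  case/eqP: nTU; apply/setP => x; have := congr1 (fun B : {set gen} => x \in B) PTU.
  rewrite /= !inE; case xP: (x \in pairs [set i]).
    by rewrite (disjointFr disjT xP) (disjointFr disjU xP).
  by move: xP; rewrite !inE => -> /=; rewrite orbF.
by rewrite msign_pairsl // ffunE eqxx !mul1r.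
Qed.

Lemma gpow_nil (x : grass) n : gmul x x = 0 -> gpow x n.+2 = 0.
Proof.
move=> xx; elim: n => [|n IHn]; first by rewrite /gpow /= gmul1r.
by rewrite /gpow iterS -/(gpow x n.+2) IHn gmulr0.
Qed.

Lemma gexp_pair (t : K) :
  gexp (t *: gmul (psibar i) (psi i)) = gone + t *: mono (pairs [set i]).
Proof.
rewrite pair_mono /gexp !big_ord_recl big1 ?addr0 => [|k _]; last first.
  rewrite gpow_nil ?scaler0 // gmulZl gmulZr gmul_mono msignE.
  have /negPf -> : ~~ [disjoint pairs [set i] & pairs [set i]].
    by rewrite -setI_eq0 setIid; apply/set0Pn; exists (i, true); rewrite !inE.
  by rewrite scale0r !scaler0.
by rewrite /gpow /= gmul1r invr1 !scale1r.
Qed.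

Lemma berezin_gexp_mul (t : K) (y : grass) :
  berezin i (gmul (gexp (t *: gmul (psibar i) (psi i))) y) = berezin i y + t *: subst0 y.
Proof. by rewrite gexp_pair gmulDl gmul1l gmulZl linearD linearZZ /= berezin_pairs_mul. Qed.

Lemma berezin_eq0 (x : grass) : subst0 x = x -> berezin i x = 0.
Proof. by move <-; apply/ffunP => U; rewrite !ffunE !inE !eqxx !orbT /=; case: ifP. Qed.

Lemma berezin_tau (A : {set V}) : i \in A -> berezin i (tau A) = tau (A :\ i) :> grass.
Proof.
move=> iA; rewrite !tau_mono berezin_mono.
have -> : pairs [set i] \subset pairs A by apply/subsetP => x; rewrite !inE => /eqP ->.
by congr mono; apply/setP => x; rewrite !inE.
Qed.

Lemma subst0_tau (A : {set V}) : subst0 (tau A) = if i \in A then 0 else tau A :> grass.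
Proof. by rewrite tau_mono subst0_mono !inE /= orbb. Qed.

Lemma berezin_mono_mul_pairs (S : {set gen}) (B : {set V}) :
  {in S, forall x, x.1 != i} -> i \in B ->
  berezin i (gmul (mono S) (mono (pairs B))) = gmul (mono S) (mono (pairs (B :\ i))).
Proof.
move=> Si iB; rewrite !gmul_mono linearZZ /= berezin_mono msign_pairs_setD1r //.
have -> : pairs [set i] \subset S :|: pairs B.
  by apply/subsetP => x; rewrite !inE => /eqP ->; rewrite iB orbT.
congr (_ *: mono _); apply/setP => x; rewrite !inE.
have [xS | xS] := boolP (x \in S); last by rewrite andbC.
by rewrite (negPf (Si x xS)).
Qed.

Lemma berezin_cross_term (A : {set V}) (j k : V) : i \in A -> j != i -> k != i ->
  berezin i (cross_term A j k) = cross_term (A :\ i) j k.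
Proof.
move=> iA ji ki; rewrite /cross_term !tau_mono [gmul (psibar j) _]gmul_mono !gmulZl.
rewrite linearZZ /= berezin_mono_mul_pairs.
- by congr (_ *: gmul _ (mono (pairs _))); apply/setP => v; rewrite !inE; bool_congr.
- by move=> x; rewrite !inE => /orP[] /eqP -> /=.
- by rewrite !inE iA [i == j]eq_sym [i == k]eq_sym ji ki.
Qed.

Lemma berezin_cross_term_at (A : {set V}) (j k : V) : k != j -> (j == i) || (k == i) ->
  berezin i (cross_term A j k) = 0.
Proof.
move=> kj jki; have [c ->] := cross_term_mono A j k.
rewrite linearZZ /= berezin_mono; case: ifP => [|_]; last by rewrite scaler0.
move/subsetP => iS; case/orP: jki => /eqP eqi; rewrite -eqi in iS kj.
  by have := iS (j, false); rewrite !inE /= !xpair_eqE !eqxx /= [j == k]eq_sym (negPf kj) /= => /(_ isT).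
by have := iS (k, true); rewrite !inE /= !xpair_eqE !eqxx (negPf kj) /= => /(_ isT).
Qed.

Lemma subst0_cross_term (A : {set V}) (j k : V) :
  subst0 (cross_term A j k) = if [|| i \in A, j == i | k == i] then 0 else cross_term A j k.
Proof.
have [c ->] := cross_term_mono A j k; rewrite linearZZ /= subst0_mono !inE /= !xpair_eqE.
rewrite !andbT !andbF /= !orbF [i == j]eq_sym [i == k]eq_sym.
by case: (j =P i); case: (k =P i); case: (i \in A); rewrite /= ?scaler0.
Qed.


Lemma berezin_tau_sum (A : {set V}) : i \in A -> berezin i (tau_sum A) = tau_sum (A :\ i).
Proof.
move=> iA; rewrite linear_sum (bigD1 i) //= berezin_eq0 ?subst0_tau ?setD11 // add0r.
apply: eq_big => [j | j /andP[jA ji]]; first by rewrite in_setD1 andbC.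
have iAj : i \in A :\ j by rewrite in_setD1 eq_sym ji iA.
by rewrite berezin_tau // !setDDl setUC.
Qed.

Lemma berezin_cross_sum (A : {set V}) :
  i \in A -> berezin i (cross_sum A) = cross_sum (A :\ i).
Proof.
move=> iA; rewrite linear_sum (bigD1 i) //= linear_sum big1 ?add0r => [|k /andP[_ ki]].
  apply: eq_big => [j | j /andP[jA ji]]; first by rewrite in_setD1 andbC.
  rewrite linear_sum (bigD1 i) /=; last by rewrite iA eq_sym ji.
  rewrite berezin_cross_term_at ?eqxx ?orbT 1?eq_sym // add0r.
  apply: eq_big => [k | k /andP[/andP[kA kj] ki]]; first by rewrite in_setD1 andbC andbA.
  by rewrite berezin_cross_term.
by rewrite /= berezin_cross_term_at ?eqxx.
Qed.

Lemma subst0_tau_sum (A : {set V}) :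
  subst0 (tau_sum A) = if i \in A then tau (A :\ i) else tau_sum A.
Proof.
rewrite linear_sum /=; case: ifP => iA.
  rewrite (bigD1 i) //= subst0_tau setD11 big1 ?addr0 // => j /andP[jA ji].
  by rewrite subst0_tau in_setD1 eq_sym ji iA.
by apply: eq_bigr => j jA; rewrite subst0_tau in_setD1 iA andbF.
Qed.

Lemma subst0_cross_sum (A : {set V}) :
  subst0 (cross_sum A) = if i \in A then 0 else cross_sum A.
Proof.
rewrite linear_sum /=; case: ifP => iA.
  by rewrite big1 // => j _; rewrite linear_sum /= big1 // => k _; rewrite subst0_cross_term iA.
apply: eq_bigr => j jA; rewrite linear_sum /=; apply: eq_bigr => k /andP[kA _].
have notA l : l \in A -> (l == i) = false by move=> lA; apply: contraNF (negbT iA) => /eqP <-.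
by rewrite subst0_cross_term iA !notA.
Qed.

Lemma subst0_fA (lam : K) (A : {set V}) :
  subst0 (fA lam A) = if i \in A then tau (A :\ i) else fA lam A.
Proof.
rewrite fAE linearB linearD linearZZ /= subst0_tau subst0_tau_sum subst0_cross_sum.
by case: ifP; rewrite ?scaler0 ?add0r ?subr0.
Qed.

Lemma berezin_fA (lam : K) (A : {set V}) :
  i \in A -> berezin i (fA lam A) = fA lam (A :\ i) - lam *: tau (A :\ i).
Proof.
move=> iA; rewrite !fAE linearB linearD linearZZ /= berezin_tau // berezin_tau_sum //.
rewrite berezin_cross_sum // (cardsD1 i A) iA natrD.
by apply/ffunP => U; rewrite !ffunE /GRing.scale /=; ring.
Qed.

Lemma berezin_gexp_tau (t : K) (A : {set V}) :
  berezin i (gmul (gexp (t *: gmul (psibar i) (psi i))) (tau A))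
    = if i \in A then tau (A :\ i) else t *: tau A.
Proof.
rewrite berezin_gexp_mul subst0_tau; case: ifP => iA.
  by rewrite berezin_tau // scaler0 addr0.
by rewrite berezin_eq0 ?add0r // subst0_tau iA.
Qed.

Lemma berezin_gexp_fA (t lam : K) (A : {set V}) :
  berezin i (gmul (gexp (t *: gmul (psibar i) (psi i))) (fA lam A))
    = if i \in A then fA lam (A :\ i) + (t - lam) *: tau (A :\ i) else t *: fA lam A.
Proof.
rewrite berezin_gexp_mul subst0_fA; case: ifP => iA.
  by rewrite berezin_fA // scalerBl -addrA [- _ + _]addrC.
by rewrite berezin_eq0 ?add0r // subst0_fA iA.
Qed.

End Grassmann.

Theorem lemma5p1 (V : finType) (A : {set V}) (i : V) (t lam : Cplx) :
  (berezin i (gmul (gexp (t *: gmul (psibar i) (psi i))) (tau A))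
     = if i \in A then tau (A :\ i) else t *: tau A)
  /\
  (berezin i (gmul (gexp (t *: gmul (psibar i) (psi i))) (fA lam A))
     = if i \in A then fA lam (A :\ i) + (t - lam) *: tau (A :\ i)
       else t *: fA lam A).
Proof. by split; [apply: berezin_gexp_tau | apply: berezin_gexp_fA]. Qed.
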